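(* Let $G=(V,E)$ be a finite connected graph (with edge weights $w_{xy}>0$ and vertex measure $\mu:V\to(0,\infty)$) which satisfies condition CD$(F;0)$ for some CD-function $F$, and let $\varphi$ be the relaxation function associated with $F$. Suppose $u:[0,\infty)\times V\to(0,\infty)$ is a solution of the heat equation on $G$. Then $$-\Delta(\log u)(t,x)\le\varphi(t)\quad\text{for all }(t,x)\in(0,\infty)\times V,$$ and consequently $$\Psi_\Upsilon(\log u)(t,x)-\partial_t(\log u)(t,x)\le\varphi(t)\quad\text{for all }(t,x)\in(0,\infty)\times V.$$
   Context: Graphs are undirected and locally finite; $x\sim y$ means $xy\in E$; each edge has a weight $w_{xy}=w_{yx}>0$; $\mu:V\to(0,\infty)$. The Laplacian is $\Delta u(x)=\frac1{\mu(x)}\sum_{y\sim x}w_{xy}(u(y)-u(x))$ and $L:=-\Delta$. For $H:\mathbb R\to\mathbb R$ and $v:V\to\mathbb R$, $\Psi_H(v)(x)=\frac1{\mu(x)}\sum_{y\sim x}w_{xy}H(v(y)-v(x))$. Let $\Upsilon(z)=e^z-1-z$, so $\Upsilon'(z)=e^z-1$. A CD-function is a continuous $F:[0,\infty)\to[0,\infty)$ with $F(0)=0$, $x\mapsto F(x)/x$ strictly increasing on $(0,\infty)$, and $\int_1^\infty dr/F(r)<\infty$. Its relaxation function is the unique positive solution $\varphi:(0,\infty)\to(0,\infty)$ of $\dot\varphi(t)+F(\varphi(t))=0$ for $t>0$ with $\varphi(t)\to\infty$ as $t\to0+$. $G$ satisfies CD$(F;0)$ if for every $x\in V$ and every $v:V\to\mathbb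 R$ with $Lv(x)>0$ and $Lv(x)\ge Lv(y)$ for all $y\sim x$, one has $\Delta\Psi_{\Upsilon'}(v)(x)\ge F(Lv(x))$. A solution of the heat equation is a function $u(t,x)$, continuously differentiable in $t$, with $\partial_tu=\Delta u$ on $[0,\infty)\times V$ (time derivative one-sided at $t=0$). *)

From Stdlib Require Import Reals Lra List Relations.
Open Scope R_scope.

Definition vsum {V : Type} (vs : list V) (f : V -> R) : R :=
  fold_right (fun y acc => f y + acc) 0 vs.

(* A finite weighted graph: vertex type V enumerated (without repetition)
   by vs; weights w : V -> V -> R, symmetric and nonnegative, the edge set
   being { xy | w x y > 0 }; vertex measure mu > 0. *)
Definition finite_weighted_graph {V : Type} (vs : list V)
    (w : V -> V -> R) (mu : V -> R) : Prop :=
  NoDup vs /\ (forall x : V, In x vs) /\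
  (forall x y, w x y = w y x) /\ (forall x y, 0 <= w x y) /\
  (forall x, 0 < mu x).

Definition adj {V : Type} (w : V -> V -> R) (x y : V) : Prop := 0 < w x y.

Definition connected {V : Type} (w : V -> V -> R) : Prop :=
  forall x y : V, clos_refl_trans V (adj w) x y.

Definition lap {V : Type} (vs : list V) (w : V -> V -> R) (mu : V -> R)
    (u : V -> R) (x : V) : R :=
  / mu x * vsum vs (fun y => w x y * (u y - u x)).

Definition Lop {V : Type} (vs : list V) (w : V -> V -> R) (mu : V -> R)
    (u : V -> R) (x : V) : R := - lap vs w mu u x.

Definition PsiH {V : Type} (vs : list V) (w : V -> V -> R) (mu : V -> R)
    (H : R -> R) (v : V -> R) (x : V) : R :=
  / mu x * vsum vs (fun y => w x y * H (v y - v x)).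

Definition Upsilon (z : R) : R := exp z - 1 - z.
Definition Upsilon' (z : R) : R := exp z - 1.

Definition CD_function (F : R -> R) : Prop :=
  (forall r, 0 <= r -> forall eps, 0 < eps -> exists delta, 0 < delta /\
      forall s, 0 <= s -> Rabs (s - r) < delta -> Rabs (F s - F r) < eps) /\
  (forall r, 0 <= r -> 0 <= F r) /\
  F 0 = 0 /\
  (forall x y, 0 < x -> x < y -> F x / x < F y / y) /\
  (* the improper integral  int_1^oo dr / F(r)  converges *)
  (exists l : R, forall eps, 0 < eps -> exists B, 1 <= B /\
      forall b (pr : Riemann_integrable (fun r => / F r) 1 b),
        B <= b -> Rabs (RiemannInt pr - l) < eps).

Definition relaxation_function (F phi : R -> R) : Prop :=
  (forall t, 0 < t -> 0 < phi t) /\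
  (forall t, 0 < t -> derivable_pt_lim phi t (- F (phi t))) /\
  (forall M, exists delta, 0 < delta /\
      forall t, 0 < t < delta -> M < phi t).

Definition CD {V : Type} (vs : list V) (w : V -> V -> R) (mu : V -> R)
    (F : R -> R) : Prop :=
  forall (x : V) (v : V -> R),
    0 < Lop vs w mu v x ->
    (forall y, adj w x y -> Lop vs w mu v y <= Lop vs w mu v x) ->
    F (Lop vs w mu v x) <= lap vs w mu (PsiH vs w mu Upsilon' v) x.

(* u solves the heat equation on [0,oo) x V: differentiable in t with
   d/dt u = Delta u for t > 0, one-sided (right) derivative at t = 0.
   (Continuity of the t-derivative is automatic: it equals Delta u(t),
   a finite combination of the continuous functions t |-> u(t,y).) *)
Definition heat_solution {V : Type} (vs : list V) (w : V -> V -> R)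
    (mu : V -> R) (u : R -> V -> R) : Prop :=
  (forall x t, 0 < t ->
     derivable_pt_lim (fun s => u s x) t (lap vs w mu (u t) x)) /\
  (forall x eps, 0 < eps -> exists delta, 0 < delta /\
     forall h, 0 < h < delta ->
       Rabs ((u h x - u 0 x) / h - lap vs w mu (u 0) x) < eps).

(* Maximum principle for Phi(t, x) := L(t, x) - phi(t), where L := -Delta(log u).
   Since d/dt log u = Delta u / u = Psi_{Upsilon'}(log u), we get
   d/dt L = -Delta Psi_{Upsilon'}(log u).  Near t = 0, L stays bounded while phi
   blows up, so Phi < 0 there.  If Phi were positive somewhere, its maximum over
   [d, t] x V would sit at some (s, x) with s > d; there L(s, .) is maximal at x
   and L(s, x) > phi(s) > 0, so CD(F;0) and the monotonicity of F give
   d/dt Phi(s, x) <= F(phi s) - F(L(s, x)) < 0, contradicting maximality from the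
   left.  The second inequality follows from Psi_Upsilon - Psi_{Upsilon'} = -Delta. *)
From Stdlib Require Import Reals List Lra.
Open Scope R_scope.

Lemma vsum_ext {V : Type} (l : list V) f g :
  (forall y, f y = g y) -> vsum l f = vsum l g.
Proof. intros H; induction l; simpl; [reflexivity|]. rewrite H, IHl; reflexivity. Qed.

Lemma vsum_le {V : Type} (l : list V) f g :
  (forall y, f y <= g y) -> vsum l f <= vsum l g.
Proof. intros H; induction l as [|a l IH]; simpl; [lra|]. specialize (H a); lra. Qed.

Lemma vsum_scal {V : Type} (l : list V) c f :
  vsum l (fun y => c * f y) = c * vsum l f.
Proof. induction l; simpl; [lra|]. rewrite IHl; lra. Qed.

Lemma vsum_minus {V : Type} (l : list V) f g :
  vsum l (fun y => f y - g y) = vsum l f - vsum l g.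
Proof. induction l; simpl; [lra|]. rewrite IHl; lra. Qed.

Lemma vsum_nonneg {V : Type} (l : list V) f :
  (forall z, 0 <= f z) -> 0 <= vsum l f.
Proof. intros H; induction l as [|b l IH]; simpl; [lra|]. specialize (H b); lra. Qed.

Lemma vsum_abs_ge {V : Type} (l : list V) f x :
  In x l -> f x <= vsum l (fun y => Rabs (f y)).
Proof.
  intros Hin; induction l as [|a l IH]; simpl in *; [contradiction|].
  destruct Hin as [<-|Hin].
  - pose proof (Rle_abs (f a)).
    pose proof (vsum_nonneg l (fun y => Rabs (f y)) (fun y => Rabs_pos (f y))). lra.
  - pose proof (Rabs_pos (f a)). specialize (IH Hin). lra.
Qed.

Lemma derivable_pt_lim_vsum {V : Type} (l : list V) (f : R -> V -> R) f' t :
  (forall y, derivable_pt_lim (fun s => f s y) t (f' y)) ->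
  derivable_pt_lim (fun s => vsum l (f s)) t (vsum l f').
Proof.
  intros H; induction l as [|a l IH]; simpl.
  - apply derivable_pt_lim_const.
  - apply (derivable_pt_lim_plus (fun s => f s a) (fun s => vsum l (f s))); auto.
Qed.

Lemma derivable_pt_lim_ln_comp (f : R -> R) t d :
  0 < f t -> derivable_pt_lim f t d ->
  derivable_pt_lim (fun s => ln (f s)) t (d / f t).
Proof.
  intros Hpos Hd. unfold Rdiv. rewrite Rmult_comm.
  exact (derivable_pt_lim_comp f ln t d (/ f t) Hd (derivable_pt_lim_ln _ Hpos)).
Qed.

Lemma derivable_pt_lim_left_max_ge0 (h : R -> R) t l a :
  a < t -> derivable_pt_lim h t l ->
  (forall s, a < s < t -> h s <= h t) -> 0 <= l.
Proof.
  intros Hat Hd Hmax. destruct (Rle_or_lt 0 l) as [|Hl]; [assumption|]. exfalso.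
  destruct (Hd (- l / 2)) as [[d Hdpos] Hd']; [lra|].
  set (k := - Rmin (d / 2) ((t - a) / 2)).
  assert (Hk1 : - k <= d / 2) by (unfold k; rewrite Ropp_involutive; apply Rmin_l).
  assert (Hk2 : - k <= (t - a) / 2) by (unfold k; rewrite Ropp_involutive; apply Rmin_r).
  assert (Hk : k < 0) by (unfold k; pose proof (Rmin_pos (d / 2) ((t - a) / 2)); lra).
  specialize (Hd' k ltac:(lra) ltac:(rewrite Rabs_left; simpl; lra)).
  specialize (Hmax (t + k) ltac:(lra)).
  assert (Hq : 0 <= (h (t + k) - h t) / k).
  { replace ((h (t + k) - h t) / k) with ((h t - h (t + k)) / - k) by (field; lra).
    apply Rle_mult_inv_pos; lra. }
  apply Rabs_def2 in Hd'. lra.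
Qed.

Lemma finite_continuous_family_max {V : Type} (x0 : V) (l : list V)
    (G : V -> R -> R) a b :
  a <= b -> (forall x c, a <= c <= b -> continuity_pt (G x) c) ->
  exists xm tm, In xm (x0 :: l) /\ a <= tm <= b /\
    forall x c, In x (x0 :: l) -> a <= c <= b -> G x c <= G xm tm.
Proof.
  intros Hab Hc. induction l as [|y l IH].
  - destruct (continuity_ab_maj (G x0) a b Hab (Hc x0)) as [tm [Hmax Htm]].
    exists x0, tm. split; [left; reflexivity|]. split; [assumption|].
    intros x c [<-|[]] Hcab; auto.
  - destruct IH as [xm [tm [Hxm [Htm Hmax]]]].
    destruct (continuity_ab_maj (G y) a b Hab (Hc y)) as [ty [Hmaxy Hty]].
    destruct (Rle_or_lt (G y ty) (G xm tm)).
    + exists xm, tm. split; [simpl in *; tauto|]. split; [assumption|].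
      intros x c [<-|[<-|Hx]] Hcab.
      * apply Hmax; [left|]; auto.
      * specialize (Hmaxy c Hcab); lra.
      * apply Hmax; [right|]; auto.
    + exists y, ty. split; [right; left; reflexivity|]. split; [assumption|].
      intros x c [Hx|[<-|Hx]] Hcab.
      * specialize (Hmax x c ltac:(left; exact Hx) Hcab). lra.
      * auto.
      * specialize (Hmax x c ltac:(right; exact Hx) Hcab). lra.
Qed.

Definition near_0plus (P : R -> Prop) : Prop :=
  exists eta, 0 < eta /\ forall h, 0 < h < eta -> P h.

Lemma near_0plus_and (P Q : R -> Prop) :
  near_0plus P -> near_0plus Q -> near_0plus (fun h => P h /\ Q h).
Proof.
  intros [e1 [He1 HP]] [e2 [He2 HQ]]. exists (Rmin e1 e2).
  split; [apply Rmin_pos; assumption|].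
  intros h Hh. pose proof (Rmin_l e1 e2). pose proof (Rmin_r e1 e2).
  split; [apply HP | apply HQ]; lra.
Qed.

Lemma near_0plus_forall_list {V : Type} (l : list V) (P : V -> R -> Prop) :
  (forall z, near_0plus (P z)) -> near_0plus (fun h => forall z, In z l -> P z h).
Proof.
  intros H. induction l as [|y l IH].
  - exists 1. split; [lra|]. intros h _ z [].
  - destruct (near_0plus_and _ _ (H y) IH) as [eta [Heta Hyl]].
    exists eta. split; [assumption|].
    intros h Hh z Hz. destruct (Hyl h Hh) as [Hy Hl].
    destruct Hz as [<-|Hz]; auto.
Qed.

Lemma near_0plus_witness (P : R -> Prop) t :
  0 < t -> near_0plus P -> exists h, 0 < h < t /\ P h.
Proof.
  intros Ht [eta [Heta HP]]. exists (Rmin eta t / 2).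
  pose proof (Rmin_pos eta t Heta Ht). pose proof (Rmin_l eta t). pose proof (Rmin_r eta t).
  split; [lra|]. apply HP. lra.
Qed.

Lemma near_0plus_close_of_right_deriv (f : R -> R) L eps :
  0 < eps ->
  (forall e, 0 < e -> near_0plus (fun h => Rabs ((f h - f 0) / h - L) < e)) ->
  near_0plus (fun h => Rabs (f h - f 0) < eps).
Proof.
  intros Heps Hder. destruct (Hder 1 ltac:(lra)) as [d [Hd Hq]].
  set (K := Rabs L + 1).
  assert (HK : 0 < K) by (unfold K; pose proof (Rabs_pos L); lra).
  exists (Rmin d (eps / K)). split; [apply Rmin_pos; [|apply Rdiv_lt_0_compat]; lra|].
  intros h Hh. pose proof (Rmin_l d (eps / K)). pose proof (Rmin_r d (eps / K)).
  specialize (Hq h ltac:(lra)).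
  assert (HqK : Rabs ((f h - f 0) / h) < K).
  { replace ((f h - f 0) / h) with (((f h - f 0) / h - L) + L) by ring.
    pose proof (Rabs_triang ((f h - f 0) / h - L) L). unfold K. lra. }
  replace (f h - f 0) with ((f h - f 0) / h * h) by (field; lra).
  rewrite Rabs_mult, (Rabs_right h) by lra.
  apply Rle_lt_trans with (K * h); [apply Rmult_le_compat_r; lra|].
  replace eps with (K * (eps / K)) by (field; lra). apply Rmult_lt_compat_l; lra.
Qed.

Lemma near_0plus_continuity_pt_comp (g f : R -> R) eps :
  0 < eps -> continuity_pt g (f 0) ->
  (forall e, 0 < e -> near_0plus (fun h => Rabs (f h - f 0) < e)) ->
  near_0plus (fun h => Rabs (g (f h) - g (f 0)) < eps).
Proof.
  intros Heps Hg Hf.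
  destruct (Hg eps Heps) as [alpha [Halpha Hg']]. simpl in Hg'.
  destruct (Hf alpha Halpha) as [eta [Heta Hclose]].
  exists eta. split; [assumption|]. intros h Hh.
  destruct (Req_dec (f h) (f 0)) as [E|E].
  - rewrite E, Rminus_diag, Rabs_R0. assumption.
  - apply Hg'. split; [split; [exact I | auto] | apply Hclose; assumption].
Qed.

Definition weighted_degree {V : Type} (vs : list V) (w : V -> V -> R)
    (mu : V -> R) (x : V) : R :=
  / mu x * vsum vs (fun y => w x y).

Lemma Lop_le_of_close {V : Type} (vs : list V) w mu (a b : V -> R) c x :
  (forall y, 0 <= w x y) -> 0 < mu x -> (forall z, Rabs (b z - a z) < c) ->
  Lop vs w mu b x <= Lop vs w mu a x + 2 * c * weighted_degree vs w mu x.
Proof.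
  intros Hw Hmu Hclose. unfold Lop, lap, weighted_degree.
  assert (Hsum : vsum vs (fun y => w x y * (a y - a x)) - 2 * c * vsum vs (fun y => w x y)
                 <= vsum vs (fun y => w x y * (b y - b x))).
  { rewrite <- vsum_scal, <- vsum_minus. apply vsum_le. intros y.
    pose proof (Hclose y) as Hy; pose proof (Hclose x) as Hx.
    apply Rabs_def2 in Hx, Hy. specialize (Hw y). nra. }
  assert (0 < / mu x) by (apply Rinv_0_lt_compat; assumption). nra.
Qed.

Lemma derivable_pt_lim_Lop {V : Type} (vs : list V) w mu (f : R -> V -> R) f' t x :
  (forall y, derivable_pt_lim (fun s => f s y) t (f' y)) ->
  derivable_pt_lim (fun s => Lop vs w mu (f s) x) t (Lop vs w mu f' x).
Proof.
  intros Hf. unfold Lop, lap.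
  apply (derivable_pt_lim_opp (fun s => / mu x * vsum vs (fun y => w x y * (f s y - f s x)))).
  apply (derivable_pt_lim_scal (fun s => vsum vs (fun y => w x y * (f s y - f s x)))).
  apply (derivable_pt_lim_vsum vs (fun s y => w x y * (f s y - f s x))). intros y.
  apply (derivable_pt_lim_scal (fun s => f s y - f s x)).
  apply (derivable_pt_lim_minus (fun s => f s y) (fun s => f s x)); apply Hf.
Qed.

Lemma lap_div_eq_PsiH_ln {V : Type} (vs : list V) w mu (f : V -> R) x :
  (forall y, 0 < f y) ->
  lap vs w mu f x / f x = PsiH vs w mu Upsilon' (fun y => ln (f y)) x.
Proof.
  intros Hf. unfold lap, PsiH, Rdiv. rewrite Rmult_assoc, (Rmult_comm _ (/ f x)), <- vsum_scal.
  f_equal. apply vsum_ext. intros y. unfold Upsilon'.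
  replace (ln (f y) - ln (f x)) with (ln (f y) + - ln (f x)) by ring.
  rewrite exp_plus, exp_Ropp, !exp_ln by apply Hf.
  specialize (Hf x). field. lra.
Qed.

Lemma PsiH_Upsilon_sub_Upsilon' {V : Type} (vs : list V) w mu (v : V -> R) x :
  PsiH vs w mu Upsilon v x - PsiH vs w mu Upsilon' v x = Lop vs w mu v x.
Proof.
  unfold PsiH, Lop, lap. rewrite <- Rmult_minus_distr_l, <- vsum_minus.
  rewrite (vsum_ext _ _ (fun y => -1 * (w x y * (v y - v x))))
    by (intro; unfold Upsilon, Upsilon'; ring).
  rewrite vsum_scal. ring.
Qed.

Lemma CD_function_increasing (F : R -> R) a b :
  (forall x y, 0 < x -> x < y -> F x / x < F y / y) ->
  (forall r, 0 <= r -> 0 <= F r) -> 0 < a -> a < b -> F a < F b.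
Proof.
  intros Hratio Hnn Ha Hab. specialize (Hratio a b Ha Hab).
  assert (0 <= F a / a) by (apply Rle_mult_inv_pos; [apply Hnn|]; lra).
  replace (F a) with (a * (F a / a)) by (field; lra).
  replace (F b) with (b * (F b / b)) by (field; lra). nra.
Qed.

Section HeatSolution.

Variables (V : Type) (vs : list V) (w : V -> V -> R) (mu : V -> R) (u : R -> V -> R).
Hypothesis vs_full : forall x, In x vs.
Hypothesis w_ge0 : forall x y, 0 <= w x y.
Hypothesis mu_gt0 : forall x, 0 < mu x.
Hypothesis u_heat : heat_solution vs w mu u.
Hypothesis u_gt0 : forall t x, 0 <= t -> 0 < u t x.

Let logu (t : R) (y : V) : R := ln (u t y).

Lemma derivable_pt_lim_logu t x :
  0 < t -> derivable_pt_lim (fun s => logu s x) t (PsiH vs w mu Upsilon' (logu t) x).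
Proof.
  intros Ht. unfold logu. rewrite <- lap_div_eq_PsiH_ln by (intros; apply u_gt0; lra).
  apply derivable_pt_lim_ln_comp; [apply u_gt0; lra | apply (proj1 u_heat); assumption].
Qed.

Lemma derivable_pt_lim_Lop_logu t x :
  0 < t ->
  derivable_pt_lim (fun s => Lop vs w mu (logu s) x) t
    (Lop vs w mu (PsiH vs w mu Upsilon' (logu t)) x).
Proof. intros Ht. apply derivable_pt_lim_Lop. intros y. apply derivable_pt_lim_logu, Ht. Qed.

Lemma Lop_logu_bounded_near_0 :
  exists B, near_0plus (fun h => forall x, Lop vs w mu (logu h) x <= B).
Proof.
  set (bound := fun x => Lop vs w mu (logu 0) x + 2 * 1 * weighted_degree vs w mu x).
  exists (vsum vs (fun x => Rabs (bound x))).
  destruct (near_0plus_forall_list vs (fun z h => Rabs (logu h z - logu 0 z) < 1))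
    as [eta [Heta Hclose]].
  { intros z. apply (near_0plus_continuity_pt_comp ln (fun s => u s z)); [lra| |].
    - apply derivable_continuous_pt. exists (/ u 0 z).
      apply derivable_pt_lim_ln, u_gt0; lra.
    - intros e He. apply (near_0plus_close_of_right_deriv (fun s => u s z) (lap vs w mu (u 0) z) e He).
      exact (proj2 u_heat z). }
  exists eta. split; [assumption|]. intros h Hh x.
  apply Rle_trans with (bound x); [|apply vsum_abs_ge, vs_full].
  apply Lop_le_of_close; [apply w_ge0 | apply mu_gt0 |].
  intros z. apply Hclose; auto.
Qed.

Variables (F phi : R -> R).
Hypothesis F_ge0 : forall r, 0 <= r -> 0 <= F r.
Hypothesis F_ratio_increasing : forall x y, 0 < x -> x < y -> F x / x < F y / y.
Hypothesis CD_F : CD vs w mu F.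
Hypothesis phi_relaxation : relaxation_function F phi.

Lemma Lop_logu_below_phi_near_0 :
  near_0plus (fun h => forall x, Lop vs w mu (logu h) x < phi h).
Proof.
  destruct Lop_logu_bounded_near_0 as [B HB].
  destruct (near_0plus_and _ _ HB (proj2 (proj2 phi_relaxation) B)) as [eta [Heta H]].
  exists eta. split; [assumption|]. intros h Hh x.
  destruct (H h Hh) as [HLB HBphi]. specialize (HLB x). lra.
Qed.

(* The left-hand side is the time derivative of Lop (logu .) x - phi at t. *)
Lemma Lop_logu_sub_phi_deriv_neg t x :
  0 < t -> phi t < Lop vs w mu (logu t) x ->
  (forall y, Lop vs w mu (logu t) y <= Lop vs w mu (logu t) x) ->
  Lop vs w mu (PsiH vs w mu Upsilon' (logu t)) x - - F (phi t) < 0.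
Proof.
  intros Ht Habove Hmax.
  assert (Hphi : 0 < phi t) by (apply (proj1 phi_relaxation), Ht).
  assert (HCD : F (Lop vs w mu (logu t) x)
                <= lap vs w mu (PsiH vs w mu Upsilon' (logu t)) x).
  { apply CD_F; [lra | intros y _; apply Hmax]. }
  pose proof (CD_function_increasing F _ _ F_ratio_increasing F_ge0 Hphi Habove).
  change (Lop vs w mu (PsiH vs w mu Upsilon' (logu t)) x)
    with (- lap vs w mu (PsiH vs w mu Upsilon' (logu t)) x). lra.
Qed.

Theorem Lop_logu_le_phi t x : 0 < t -> Lop vs w mu (logu t) x <= phi t.
Proof.
  intros Ht. destruct (Rle_or_lt (Lop vs w mu (logu t) x) (phi t)) as [|Hgt]; [assumption|].
  exfalso.
  set (Phi := fun y s => Lop vs w mu (logu s) y - phi s).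
  assert (HPhi' : forall y s, 0 < s -> derivable_pt_lim (Phi y) s
            (Lop vs w mu (PsiH vs w mu Upsilon' (logu s)) y - - F (phi s))).
  { intros y s Hs. apply (derivable_pt_lim_minus (fun s => Lop vs w mu (logu s) y) phi).
    - apply derivable_pt_lim_Lop_logu, Hs.
    - apply (proj1 (proj2 phi_relaxation)), Hs. }
  destruct (near_0plus_witness _ t Ht Lop_logu_below_phi_near_0) as [d [Hd Hbelow]].
  destruct (finite_continuous_family_max x vs Phi d t) as [xm [tm [_ [Htm Hmax]]]].
  { lra. }
  { intros y c Hc. apply derivable_continuous_pt. eexists. apply HPhi'. lra. }
  assert (Hpos : 0 < Phi xm tm).
  { specialize (Hmax x t ltac:(left; reflexivity) ltac:(lra)). unfold Phi in *. lra. }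
  assert (Hdtm : d < tm).
  { destruct (Req_dec tm d) as [->|]; [|lra]. specialize (Hbelow xm). unfold Phi in Hpos. lra. }
  assert (Hleft : forall s, d < s < tm -> Phi xm s <= Phi xm tm)
    by (intros s Hs; apply Hmax; [right|]; auto; lra).
  assert (Hspace : forall y, Phi y tm <= Phi xm tm) by (intros y; apply Hmax; [right|]; auto; lra).
  pose proof (derivable_pt_lim_left_max_ge0 _ _ _ d Hdtm (HPhi' xm tm ltac:(lra)) Hleft).
  unfold Phi in Hpos, Hspace.
  assert (Hspace' : forall y, Lop vs w mu (logu tm) y <= Lop vs w mu (logu tm) xm)
    by (intros y; specialize (Hspace y); lra).
  pose proof (Lop_logu_sub_phi_deriv_neg tm xm ltac:(lra) ltac:(lra) Hspace'). lra.
Qed.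

End HeatSolution.

Theorem theorem1p1 (V : Type) (vs : list V) (w : V -> V -> R) (mu : V -> R)
    (F phi : R -> R) (u : R -> V -> R) :
  finite_weighted_graph vs w mu ->
  connected w ->
  CD_function F ->
  CD vs w mu F ->
  relaxation_function F phi ->
  heat_solution vs w mu u ->
  (forall t x, 0 <= t -> 0 < u t x) ->
  (forall t x, 0 < t ->
     - lap vs w mu (fun y => ln (u t y)) x <= phi t) /\
  (forall t x d, 0 < t ->
     derivable_pt_lim (fun s => ln (u s x)) t d ->
     PsiH vs w mu Upsilon (fun y => ln (u t y)) x - d <= phi t).
Proof.
  intros [_ [Hfull [_ [Hw Hmu]]]] _ [_ [Fge0 [_ [Fratio _]]]] HCD Hphi Hheat Hu.
  pose proof (Lop_logu_le_phi V vs w mu u Hfull Hw Hmu Hheat Hu F phi Fge0 Fratio HCD Hphi)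
    as Hbound.
  split; [exact Hbound|].
  intros t x d Ht Hd.
  rewrite (uniqueness_limite _ t d _ Hd (derivable_pt_lim_logu V vs w mu u Hheat Hu t x Ht)).
  rewrite PsiH_Upsilon_sub_Upsilon'. apply Hbound, Ht.
Qed.
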